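(* Assume the different $\mathfrak{d}=(\delta)$ of $F$ is principal. Let $p\in\mathcal{O}$ be a prime element, $\varepsilon_1,\varepsilon_2\in\mathcal{O}^\times$, and $e\ge1$ an integer. Then for every $r\in\mathcal{O}$ with $p\mid r$, $$S(\delta^{-1}\varepsilon_1,\delta^{-1}r;\varepsilon_2p^e)=\begin{cases}-1,& e=1,\\ 0,& e>1.\end{cases}$$
   Context: $F$ is a totally real number field with ring of integers $\mathcal{O}$ and different $\mathfrak{d}$. A prime element is a generator of a nonzero prime ideal of $\mathcal{O}$. $e(\nu)=\exp(2\pi i\,\mathrm{Tr}_{F/\mathbb{Q}}(\nu))$. For $\nu,\mu\in\mathfrak{d}^{-1}$ and nonzero $q\in\mathcal{O}$, $S(\nu,\mu;q)=\sum_{x\in(\mathcal{O}/q\mathcal{O})^\times}e\left(\frac{\nu x+\mu x^{-1}}{q}\right)$, where $xx^{-1}\equiv1\bmod q$. *)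

From HB Require Import structures.
From mathcomp Require Import all_boot all_order all_algebra all_field.
From mathcomp Require Import complex.
From mathcomp Require Import reals trigo.
Set Implicit Arguments.
Unset Strict Implicit.
Unset Printing Implicit Defensive.
Import GRing.Theory Num.Theory.
Local Open Scope ring_scope.

Section NumberField.
Variable L : fieldExtType rat.

Definition trace (x : L) : rat :=
  \sum_(i < \dim {:L}) coord (vbasis {:L}) i (x * (vbasis {:L})`_i).

Definition inO (x : L) : Prop :=
  exists P : {poly int}, P \is monic /\ root (map_poly (fun z : int => z%:~R) P) x.

Definition dvdO (a b : L) : Prop := exists c, inO c /\ b = a * c.

Definition unitO (x : L) : Prop := inO x /\ exists y, inO y /\ x * y = 1.

Definition congO (q a b : L) : Prop := dvdO q (a - b).

Definition unit_modO (q x : L) : Prop := exists y, inO y /\ congO q (x * y) 1.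

Definition prime_elt (p : L) : Prop :=
  [/\ inO p, p != 0, ~ unitO p &
      forall a b, inO a -> inO b -> dvdO p (a * b) -> dvdO p a \/ dvdO p b].

Definition totally_real : Prop :=
  forall f : {rmorphism L -> algC}, forall x : L, f x \is Num.real.

Definition in_inv_diff (x : L) : Prop :=
  forall y, inO y -> exists z : int, trace (x * y) = z%:~R.

(* the different d is principal, generated by delta: d = delta O,
   equivalently d^{-1} = delta^{-1} O *)
Definition different_gen (delta : L) : Prop :=
  delta != 0 /\ forall x, in_inv_diff x <-> exists y, inO y /\ x = y / delta.

Definition reduced_residue_system (q : L) (s : seq L) : Prop :=
  [/\ forall x, x \in s -> inO x /\ unit_modO q x,
      forall i j, (i < size s)%N -> (j < size s)%N -> i != j ->
        ~ congO q (nth 0 s i) (nth 0 s j) &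
      forall x, inO x -> unit_modO q x -> exists2 y, y \in s & congO q x y].

Definition inverse_mod_on (q : L) (s : seq L) (inv : L -> L) : Prop :=
  forall x, x \in s -> inO (inv x) /\ congO q (x * inv x) 1.

End NumberField.

Definition expi2pi (R : realType) (t : rat) : R[i] :=
  Complex (cos (2 * pi * ratr t)) (sin (2 * pi * ratr t)).

Definition kloosterman (R : realType) (L : fieldExtType rat)
  (s : seq L) (inv : L -> L) (nu mu q : L) : R[i] :=
  \sum_(x <- s) expi2pi R (trace ((nu * x + mu * inv x) / q)).

(* Let q = eps2 p^e and psi(x) = e(x / (delta q)). Because delta generates the
   different, psi is an additive character of O/qO which is trivial exactly on
   qO, and S = sum_x psi(eps1 x) psi(r x^-1), x running over (O/qO)^x, i.e. over
   the residues prime to p.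
   For e = 1, p | r makes psi(r x^-1) = 1, and adding x = 0 turns S into the
   sum of the nontrivial character psi(eps1 .) over all of O/pO, which is 0;
   hence S = -1.
   For e >= 2 write q = q' p. For t in O the substitution x -> (1 + q' t) x
   permutes the reduced residues; it fixes x^-1 modulo q', hence fixes
   psi(r x^-1) since p | r, and multiplies psi(eps1 x) by psi(q' eps1 x t).
   Averaging over t, and using that sum_t psi(q' eps1 x t) = sum_t psi(q' t)
   does not depend on x, gives S * sum_t (1 - psi(q' t)) = 0; the last factor
   has positive real part because t -> psi(q' t) is nontrivial on units. *)

From HB Require Import structures.
From mathcomp Require Import all_boot all_order all_algebra all_field.
From mathcomp Require Import complex.
From mathcomp Require Import reals trigo boolp.
From mathcomp Require Import ring lra.
Import Order.TTheory GRing.Theory Num.Theory.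
Local Open Scope ring_scope.
Set Implicit Arguments.
Unset Strict Implicit.
Unset Printing Implicit Defensive.

(** * Integrality, divisibility and congruences in O *)

Section RingOfIntegers.
Variable L : fieldExtType rat.
Implicit Types (a b c d q x y z : L).

Lemma inO_integral x : inO x <-> integralOver intr x.
Proof. by split=> [[P [mP rP]]|[P mP rP]]; exists P. Qed.

Lemma inOD x y : inO x -> inO y -> inO (x + y).
Proof. by move=> /inO_integral ix /inO_integral iy; apply/inO_integral/integral_add. Qed.

Lemma inOM x y : inO x -> inO y -> inO (x * y).
Proof. by move=> /inO_integral ix /inO_integral iy; apply/inO_integral/integral_mul. Qed.

Lemma inON x : inO x -> inO (- x).
Proof. by move=> /inO_integral ix; apply/inO_integral/integral_opp. Qed.

Lemma inOB x y : inO x -> inO y -> inO (x - y).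
Proof. by move=> ix iy; apply/inOD/inON. Qed.

Lemma inO_int (m : int) : inO (m%:~R : L).
Proof.
exists ('X - m%:P); split; first exact: monicXsubC.
by rewrite rmorphB /= map_polyX map_polyC /= root_XsubC.
Qed.

Lemma inO0 : inO (0 : L). Proof. exact: (inO_int 0). Qed.
Lemma inO1 : inO (1 : L). Proof. exact: (inO_int 1). Qed.

Lemma inOX x n : inO x -> inO (x ^+ n).
Proof. by move=> ix; elim: n => [|n IHn]; rewrite ?expr0 ?exprS; [exact: inO1|exact: inOM]. Qed.

Lemma inO_horner (P : {poly int}) x : inO x -> inO (map_poly intr P).[x].
Proof.
move=> ix; elim/poly_ind: P => [|P m IHP]; first by rewrite rmorph0 horner0; exact: inO0.
rewrite rmorphD rmorphM /= map_polyX map_polyC hornerMXaddC.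
by apply: inOD; [exact: inOM|exact: inO_int].
Qed.

Lemma dvdO0 a : dvdO a 0.
Proof. by exists 0; rewrite mulr0; split; first exact: inO0. Qed.

Lemma dvdO_refl a : dvdO a a.
Proof. by exists 1; rewrite mulr1; split; first exact: inO1. Qed.

Lemma dvdO_mulr a c : inO c -> dvdO a (a * c).
Proof. by exists c. Qed.

Lemma dvdOD a b c : dvdO a b -> dvdO a c -> dvdO a (b + c).
Proof.
by move=> [x [ix ->]] [y [iy ->]]; exists (x + y); rewrite mulrDr; split; first exact: inOD.
Qed.

Lemma dvdON a b : dvdO a b -> dvdO a (- b).
Proof. by move=> [x [ix ->]]; exists (- x); rewrite mulrN; split; first exact: inON. Qed.

Lemma dvdOB a b c : dvdO a b -> dvdO a c -> dvdO a (b - c).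
Proof. by move=> ab ac; apply/dvdOD/dvdON. Qed.

Lemma dvdOMl a b c : inO c -> dvdO a b -> dvdO a (c * b).
Proof. by move=> ic [x [ix ->]]; exists (c * x); rewrite mulrCA; split; first exact: inOM. Qed.

Lemma dvdOMr a b c : inO c -> dvdO a b -> dvdO a (b * c).
Proof. by rewrite mulrC; exact: dvdOMl. Qed.

Lemma dvdO_trans a b c : dvdO a b -> dvdO b c -> dvdO a c.
Proof.
by move=> [x [ix ->]] [y [iy ->]]; exists (x * y); rewrite mulrA; split; first exact: inOM.
Qed.

Lemma dvdO_unitl u a b : unitO u -> dvdO a b -> dvdO (u * a) b.
Proof.
case=> _ [v [iv uv1]] [x [ix ->]]; exists (v * x); split; first exact: inOM.
have -> : u * a * (v * x) = u * v * (a * x) by ring.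
by rewrite uv1 mul1r.
Qed.

Lemma congO_refl q a : congO q a a.
Proof. by rewrite /congO subrr; exact: dvdO0. Qed.

Lemma congO_sym q a b : congO q a b -> congO q b a.
Proof. by rewrite /congO -opprB => /dvdON; rewrite opprK. Qed.

Lemma congO_trans q a b c : congO q a b -> congO q b c -> congO q a c.
Proof. by rewrite /congO => ab bc; rewrite -(subrKA b); exact: dvdOD. Qed.

Lemma congOMl q a b c : inO c -> congO q a b -> congO q (c * a) (c * b).
Proof. by rewrite /congO -mulrBr; exact: dvdOMl. Qed.

Lemma congOM_dvd m c d a b : dvdO m c -> congO d a b -> congO (d * m) (c * a) (c * b).
Proof.
move=> [k [ik ->]] [w [iw Dw]]; exists (k * w); split; first exact: inOM.
by rewrite -mulrBr Dw; ring.
Qed.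

Lemma congO_dvd d q a b : dvdO d q -> congO q a b -> congO d a b.
Proof. exact: dvdO_trans. Qed.

Lemma unit_modO_dvd d q x : dvdO d q -> unit_modO q x -> unit_modO d x.
Proof. by move=> dq [y [iy xy1]]; exists y; split; last exact: congO_dvd dq xy1. Qed.

Lemma congO_mulKl q u a b : unit_modO q u -> inO a -> inO b ->
  congO q (u * a) (u * b) -> congO q a b.
Proof.
move=> [v [iv uv1]] ia ib uab; rewrite /congO.
have -> : a - b = v * (u * a - u * b) - (u * v - 1) * (a - b) by ring.
by apply: dvdOB; [exact: dvdOMl|apply: dvdOMr => //; exact: inOB].
Qed.

Lemma congO_inv q x y x' y' : inO x' -> inO y' -> congO q x y ->
  congO q (x * x') 1 -> congO q (y * y') 1 -> congO q x' y'.
Proof.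
move=> ix' iy' xy xx' yy'; rewrite /congO.
have -> : x' - y' = y' * (x * x' - 1) - x' * (y * y' - 1) - x' * y' * (x - y) by ring.
by apply: dvdOB; [apply: dvdOB; exact: dvdOMl|apply: dvdOMl => //; exact: inOM].
Qed.

End RingOfIntegers.

Arguments inO_int {L} m.
Arguments inO0 {L}.
Arguments inO1 {L}.

(** * Prime elements and units modulo prime powers *)

Section PrimeElement.
Variables (L : fieldExtType rat) (p : L).
Hypothesis Hp : prime_elt p.
Implicit Types (a b u z : L).

Lemma prime_elt_ndvd1 : ~ dvdO p 1.
Proof. by case: Hp => ip _ nup _ [c [ic pc1]]; apply: nup; split=> //; exists c. Qed.

Lemma prime_elt_ndvd_unit u : unitO u -> ~ dvdO p u.
Proof. by case=> _ [v [iv uv1]] pu; apply: prime_elt_ndvd1; rewrite -uv1; exact: dvdOMr. Qed.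

Lemma prime_elt_ndvdM a b : inO a -> inO b -> ~ dvdO p a -> ~ dvdO p b -> ~ dvdO p (a * b).
Proof. by case: Hp => _ _ _ pM ia ib npa npb /pM []. Qed.

Lemma prime_elt_dvd_nat : exists2 n : nat, (0 < n)%N & dvdO p n%:R.
Proof.
have [ip p0 _ _] := Hp.
(* [p] divides the lowest nonzero coefficient of an integer polynomial vanishing at [p]. *)
have dvd_int P : P != 0 -> (map_poly intr P).[p] = 0 ->
    exists2 m : int, m != 0 & dvdO p m%:~R.
  elim/poly_ind: P => [|P m IHP]; first by rewrite eqxx.
  rewrite rmorphD rmorphM /= map_polyX map_polyC hornerMXaddC /=.
  have [-> | m0] := eqVneq m 0; last first.
    move=> _ /eqP; rewrite addr_eq0 => /eqP Pp; exists m => //.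
    by rewrite -[_%:~R]opprK -Pp mulrC; apply/dvdON/dvdO_mulr/inO_horner.
  rewrite addr0 mulr0z addr0 => nzP /eqP; rewrite mulf_eq0 (negbTE p0) orbF => /eqP.
  by apply: IHP; apply: contraNneq nzP => ->; rewrite mul0r.
have [P [mP rP]] := ip; have [[] n n0 pn] := dvd_int P (monic_neq0 mP) (rootP rP).
  by exists n => //; rewrite lt0n; apply: contraNneq n0 => ->.
by exists n.+1 => //; move/dvdON: pn; rewrite NegzE mulrNz opprK.
Qed.

Lemma prime_elt_dvd_prime : exists2 l : nat, prime l & dvdO p l%:R.
Proof.
have [n] := prime_elt_dvd_nat; elim/ltn_ind: n => n IHn n_gt0 pn.
have n_gt1 : (1 < n)%N.
  rewrite ltn_neqAle n_gt0 andbT; apply/eqP=> n1.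
  by apply: prime_elt_ndvd1; rewrite -n1 in pn.
have [k Dn] := dvdnP (pdiv_dvd n); have pdiv_pr := pdiv_prime n_gt1.
have k_gt0 : (0 < k)%N by rewrite lt0n; apply: contraTneq n_gt0 => k0; rewrite Dn k0.
have k_lt_n : (k < n)%N by rewrite Dn; exact: ltn_Pmulr (prime_gt1 pdiv_pr) k_gt0.
move: pn; rewrite Dn natrM; case: Hp => _ _ _ pM.
case/(pM _ _ (inO_int k) (inO_int (pdiv n))) => [pk|]; last by exists (pdiv n).
exact: IHn k_lt_n k_gt0 pk.
Qed.

Lemma prime_elt_unit_mod_int (m : int) : ~ dvdO p m%:~R -> unit_modO p m%:~R.
Proof.
move=> npm; have [l l_pr pl] := prime_elt_dvd_prime.
have /coprimezP[[u v] /= Duv] : coprimez l m.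
  rewrite coprimezE prime_coprime //; apply/negP => lm.
  have /dvdzP[k Dm] : (l %| m)%Z by rewrite dvdzE.
  by apply: npm; rewrite Dm intrM; apply: dvdOMl => //; exact: inO_int.
exists v%:~R; split; first exact: inO_int.
have /(congr1 (intr : int -> L)) := Duv; rewrite rmorphD !rmorphM rmorph1 /= -pmulrn => Duv'.
rewrite /congO (_ : _ - 1 = - (u%:~R * l%:R)); last by rewrite -[X in _ - X = _]Duv'; ring.
by apply: dvdON; apply: dvdOMl => //; exact: inO_int.
Qed.

Lemma prime_elt_unit_mod z : inO z -> ~ dvdO p z -> unit_modO p z.
Proof.
move=> iz npz.
(* Induction on [P = Q * 'X + m] with [p | P.[z]]: if [p | m] then [p | Q.[z]],
   otherwise [- Q.[z] / m] inverts [z] modulo [p]. *)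
suff unit_root (P : {poly int}) : (exists i, ~ dvdO p (P`_i)%:~R) ->
    dvdO p (map_poly intr P).[z] -> unit_modO p z.
  have [P [mP rP]] := iz; apply: (unit_root P); last by rewrite (rootP rP); exact: dvdO0.
  by exists (size P).-1; rewrite -lead_coefE (monicP mP); exact: prime_elt_ndvd1.
elim/poly_ind: P => [|P m IHP]; first by case=> i; rewrite coef0 mulr0z; case; exact: dvdO0.
rewrite rmorphD rmorphM /= map_polyX map_polyC hornerMXaddC /= => -[i npi].
set Pz := (map_poly intr P).[z] => pPm; have iPz : inO Pz by exact: inO_horner.
have [pm | /prime_elt_unit_mod_int [m' [im' mm']]] := pselect (dvdO p m%:~R).
  have [pP|npP] := pselect (dvdO p Pz); last first.
    by case: (prime_elt_ndvdM iPz iz npP npz); have := dvdOB pPm pm; rewrite addrK.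
  apply: IHP pP; case: i npi => [|i]; rewrite coefD coefMX coefC /=.
    by rewrite add0r => /(_ pm).
  by rewrite addr0; exists i.
exists (- Pz * m'); split; first by apply: inOM => //; exact: inON.
rewrite /congO (_ : _ - 1 = - ((Pz * z + m%:~R) * m') + (m%:~R * m' - 1)); last by ring.
by apply: dvdOD => //; apply: dvdON; exact: dvdOMr.
Qed.

End PrimeElement.

Section UnitsModPrimePower.
Variable L : fieldExtType rat.
Implicit Types (a u z : L).

Lemma unit_modO_expn a z n : inO z -> unit_modO a z -> unit_modO (a ^+ n) z.
Proof.
move=> iz.
(* From [z y = 1 + a w]: [z y * \sum_(i < n) (- a w)^i = 1 - (- a w)^n]. *)
case=> y [iy [w [iw Dw]]]; exists (y * \sum_(i < n) (- (a * w)) ^+ i); split.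
  apply: inOM => //; elim/big_ind: _ => [|x x' ix ix'|i _]; [exact: inO0|exact: inOD|].
  by rewrite -Dw; apply: inOX; apply: inON; apply: inOB; [exact: inOM|exact: inO1].
exists (- (- w) ^+ n); split; first by apply: inON; apply: inOX; exact: inON.
have -> : z * (y * \sum_(i < n) (- (a * w)) ^+ i) =
          - ((- (a * w) - 1) * \sum_(i < n) (- (a * w)) ^+ i).
  by rewrite mulrA (_ : z * y = a * w + 1) -?Dw ?subrK //; ring.
by rewrite -subrX1 -mulrN exprMn; ring.
Qed.

Lemma unit_modO_unitl u a z : unitO u -> unit_modO a z -> unit_modO (u * a) z.
Proof. by move=> Uu; apply: unit_modO_dvd; apply: dvdO_unitl Uu (dvdO_refl a). Qed.

Lemma unitO_neq0 u : unitO u -> u != 0.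
Proof. by case=> _ [v [_ uv1]]; apply: contra_eq_neq uv1 => ->; rewrite mul0r eq_sym oner_neq0. Qed.

Variables (p eps : L) (e : nat).
Hypotheses (Hp : prime_elt p) (Heps : unitO eps) (He : (0 < e)%N).
Local Notation q := (eps * p ^+ e).

Lemma prime_power_neq0 : q != 0.
Proof. by have [_ p0 _ _] := Hp; apply: mulf_neq0; [exact: unitO_neq0|exact: expf_neq0]. Qed.

Lemma dvdO_prime_power : dvdO p q.
Proof.
exists (eps * p ^+ e.-1); split; first by apply: inOM; [case: Heps|apply: inOX; case: Hp].
by rewrite -(prednK He) exprS /= mulrCA.
Qed.

Lemma unit_modO_prime_powerP z : inO z -> unit_modO q z <-> ~ dvdO p z.
Proof.
move=> iz; split=> [[y [iy zy1]] pz | npz].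
  apply: (prime_elt_ndvd1 Hp); rewrite (_ : 1 = z * y - (z * y - 1)); last by ring.
  by apply: dvdOB (dvdO_trans dvdO_prime_power zy1); exact: dvdOMr.
by apply/unit_modO_unitl/unit_modO_expn => //; exact: prime_elt_unit_mod.
Qed.

End UnitsModPrimePower.

(** * The additive character *)

Lemma traceD (L : fieldExtType rat) (x y : L) : trace (x + y) = trace x + trace y.
Proof. by rewrite /trace -big_split; apply: eq_bigr => i _; rewrite mulrDl linearD. Qed.

Section ExpTwoPiI.
Variable R : realType.
Implicit Types a b : rat.

Lemma expi2piD a b : expi2pi R (a + b) = expi2pi R a * expi2pi R b.
Proof.
rewrite /expi2pi rmorphD mulrDr cosD sinD.
by apply/eqP; rewrite eq_complex /= eqxx /= addrC.
Qed.

Lemma expi2pi_int (n : int) : expi2pi R n%:~R = 1.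
Proof.
suff expi2pi_nat m : expi2pi R m%:R = 1.
  case: n => m; first exact: expi2pi_nat.
  by rewrite NegzE mulrNz -[LHS]mulr1 -(expi2pi_nat m.+1) -expi2piD addNr (expi2pi_nat 0).
rewrite /expi2pi (_ : 2 * pi * ratr m%:R = 0 + (pi *+ 2) *+ m); last first.
  by rewrite ratr_nat add0r -mulr_natr mulr2n; ring.
by rewrite (periodicn (@cosD2pi R)) (periodicn (@sinD2pi R)) cos0 sin0.
Qed.

Lemma cos2pi_eq1 a : cos (2 * pi * ratr a) = 1 :> R -> exists n : int, a = n%:~R.
Proof.
move=> ca1; exists (Num.floor a); set b := a - (Num.floor a)%:~R.
have cb1 : cos (2 * pi * ratr b) = 1 :> R.
  have : expi2pi R b = expi2pi R a by rewrite /b -mulrNz expi2piD expi2pi_int mulr1.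
  by move=> /(congr1 (@complex.Re R)) /= ->.
apply/eqP; rewrite -subr_eq0 -/b; apply/eqP.
have /andP[b_ge0 b_lt1] : 0 <= b < 1.
  by rewrite /b subr_ge0 floor_le ltrBlDl; have := floorD1_gt a; rewrite intrD.
have [//|b_neq0] := eqVneq b 0; exfalso.
have rb_gt0 : 0 < ratr b :> R by rewrite ltr0q lt0r b_neq0.
have rb_lt1 : ratr b < 1 :> R by rewrite -(rmorph1 ratr) ltr_rat.
have sin_gt0 : 0 < sin (pi * ratr b) :> R.
  have pi_gt0 := pi_gt0 R; apply: sin_gt0_pi; apply/andP; split; nra.
move: cb1; rewrite -mulrA mulr_natl cos_mulr2n cos2sin2 mulr2n; nra.
Qed.

Lemma expi2pi_eq1 a : expi2pi R a = 1 -> exists n : int, a = n%:~R.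
Proof. by move=> /(congr1 (@complex.Re R)) /=; exact: cos2pi_eq1. Qed.

Lemma sum_expi2pi_eq_size (I : eqType) (ts : seq I) (a : I -> rat) :
  \sum_(t <- ts) expi2pi R (a t) = (size ts)%:R -> {in ts, forall t, expi2pi R (a t) = 1}.
Proof.
have ReD : {morph @complex.Re R : x y / x + y} by case=> ? ? [].
have Re_nat n : complex.Re (n%:R : R[i]) = n%:R.
  by elim: n => // n IHn; rewrite !mulrS -IHn.
move=> /(congr1 (@complex.Re R)); rewrite (big_morph _ ReD (erefl _)) Re_nat /=.
move=> /eqP; rewrite eq_sym -subr_eq0 -[size ts]sum1_size natr_sum -sumrB big_seq psumr_eq0.
  move=> /allP cos1 t tts; have /cos2pi_eq1[n ->] : cos (2 * pi * ratr (a t)) = 1 :> R.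
    by apply/eqP; rewrite eq_sym -subr_eq0; have := cos1 t tts; rewrite tts.
  exact: expi2pi_int.
by move=> t _; rewrite subr_ge0 cos_le1.
Qed.
End ExpTwoPiI.

Definition add_char (R : realType) (L : fieldExtType rat) (delta q x : L) : R[i] :=
  expi2pi R (trace (x / (delta * q))).

Lemma add_charD (R : realType) (L : fieldExtType rat) (delta q x y : L) :
  add_char R delta q (x + y) = add_char R delta q x * add_char R delta q y.
Proof. by rewrite /add_char mulrDl traceD expi2piD. Qed.

Lemma kloostermanE (R : realType) (L : fieldExtType rat) (s : seq L) (inv : L -> L)
    (nu mu delta q : L) :
  kloosterman R s inv (nu / delta) (mu / delta) q =
  \sum_(x <- s) add_char R delta q (nu * x) * add_char R delta q (mu * inv x).
Proof.
apply: eq_bigr => x _; rewrite -add_charD /add_char invfM.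
by congr (expi2pi R (trace _)); ring.
Qed.

Section AdditiveCharacter.
Variables (R : realType) (L : fieldExtType rat) (delta : L).
Hypothesis Hdelta : different_gen delta.
Local Notation psi := (add_char R delta).
Implicit Types (a q x y : L).

Lemma add_char_dvd q x : q != 0 -> dvdO q x -> psi q x = 1.
Proof.
move=> q0 [c [ic ->]]; have [d0 inv_diff] := Hdelta.
have /(_ 1 inO1)[n] : in_inv_diff (c / delta) by apply/inv_diff; exists c.
rewrite mulr1 /add_char => tn; rewrite (_ : q * c / (delta * q) = c / delta) ?tn ?expi2pi_int //.
by field; rewrite d0 q0.
Qed.

Lemma add_char_congr q x y : q != 0 -> congO q x y -> psi q x = psi q y.
Proof. by move=> q0 xy; rewrite -(subrK y x) add_charD add_char_dvd // mul1r. Qed.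

Lemma add_char_trivial q a : q != 0 ->
  (forall y, inO y -> psi q (a * y) = 1) -> dvdO q a.
Proof.
move=> q0 triv; have [d0 inv_diff] := Hdelta.
have [w [iw Dw]] : exists w, inO w /\ a / (delta * q) = w / delta.
  by apply/inv_diff => y iy; rewrite mulrAC; apply: expi2pi_eq1; exact: triv.
exists w; split=> //; have := congr1 ( *%R^~ (delta * q)) Dw.
by rewrite /= divfK ?mulf_neq0 // => ->; field.
Qed.

End AdditiveCharacter.

Arguments add_char_trivial R [L delta] Hdelta [q a].

(** * Character sums over residue systems *)

Lemma sum_twisted_average_eq0 (K : idomainType) (I J : eqType) (xs : seq I) (ts : seq J)
    (f : I -> K) (phi : I -> J -> K) (c : K) :
  {in ts, forall t, \sum_(x <- xs) f x * phi x t = \sum_(x <- xs) f x} ->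
  {in xs, forall x, \sum_(t <- ts) phi x t = c} -> c != (size ts)%:R ->
  \sum_(x <- xs) f x = 0.
Proof.
move=> twist avg c_size.
have : (\sum_(x <- xs) f x) * c = (\sum_(x <- xs) f x) * (size ts)%:R.
  transitivity (\sum_(x <- xs) \sum_(t <- ts) f x * phi x t).
    by rewrite big_distrl; apply: eq_big_seq => x xxs; rewrite -(avg x xxs) big_distrr.
  rewrite exchange_big (eq_big_seq _ twist) -[size ts]sum1_size natr_sum mulr_sumr.
  by apply: eq_bigr => t _; rewrite mulr1.
by move/eqP; rewrite -subr_eq0 -mulrBr mulf_eq0 subr_eq0 (negbTE c_size) orbF => /eqP.
Qed.

Section ResidueSystems.
Variable L : fieldExtType rat.
Implicit Types (q : L) (T : seq L).

Definition complete_residue_system q T : Prop :=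
  [/\ uniq T, forall x, x \in T -> inO x,
      {in T &, forall x y, congO q x y -> x = y} &
      forall z, inO z -> exists2 y, y \in T & congO q z y].

Lemma rrs_congO_eq q s : reduced_residue_system q s ->
  {in s &, forall x y, congO q x y -> x = y}.
Proof.
case=> _ incong _ x y xs ys; rewrite -(nth_index 0 xs) -(nth_index 0 ys).
have [-> //|ij] := eqVneq (index x s) (index y s).
by move=> xy; exfalso; apply: (incong _ _ _ _ ij xy); rewrite index_mem.
Qed.

Lemma rrs_uniq q s : reduced_residue_system q s -> uniq s.
Proof.
case=> _ incong _; apply/(uniqP 0) => i j i_lt j_lt sij; apply/eqP/negP => /negP ij.
by apply: (incong i j i_lt j_lt ij); rewrite sij; exact: congO_refl.
Qed.

Lemma sum_congO_reindex (C : nmodType) q T (h : L -> L) (F G : L -> C) :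
  uniq T -> {in T &, forall x y, congO q x y -> x = y} ->
  {in T, forall x, exists2 y, y \in T & congO q (h x) y} ->
  {in T &, forall x y, congO q (h x) (h y) -> congO q x y} ->
  {in T &, forall x y, congO q (h x) y -> F y = G x} ->
  \sum_(x <- T) G x = \sum_(x <- T) F x.
Proof.
move=> uT injT coverT injh FG.
pose rho x := nth 0 T (find (fun y => `[< congO q (h x) y >]) T).
have rhoP x : x \in T -> rho x \in T /\ congO q (h x) (rho x).
  move=> xT; have [y yT hxy] := coverT x xT.
  have hasT : has (fun y => `[< congO q (h x) y >]) T by apply/hasP; exists y => //; apply/asboolP.
  by split; [rewrite mem_nth // -has_find|apply/asboolP/(nth_find 0 hasT)].
have rho_inj : {in T &, injective rho}.
  move=> x y xT yT rxy; apply: injT => //; apply: injh => //.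
  by apply: congO_trans (rhoP x xT).2 _; rewrite rxy; apply/congO_sym; exact: (rhoP y yT).2.
rewrite (eq_big_seq (F \o rho)) => [|x xT]; last by rewrite /= (FG x (rho x)) //; case: (rhoP x xT).
rewrite -(big_map rho predT); apply: perm_big; apply: uniq_perm => //.
  by rewrite map_inj_in_uniq.
apply: (uniq_min_size _ _ _).2; first by rewrite map_inj_in_uniq.
  by move=> _ /mapP[x xT ->]; case: (rhoP x xT).
by rewrite size_map.
Qed.

End ResidueSystems.

Lemma sum_add_char_eq0 (R : realType) (L : fieldExtType rat) (delta q a : L) (T : seq L) :
  different_gen delta -> q != 0 -> complete_residue_system q T -> inO a -> ~ dvdO q a ->
  \sum_(x <- T) add_char R delta q (a * x) = 0.
Proof.
move=> Hdelta q0 [uT iT injT coverT] ia nqa; set psi := add_char R delta q.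
have [y0 [iy0 psi_y0]] : exists y0, inO y0 /\ psi (a * y0) != 1.
  apply: contrapT => none; apply: nqa; apply: (add_char_trivial R Hdelta q0) => y iy.
  by have [//|psi_y] := eqVneq (psi (a * y)) 1; case: none; exists y.
have shift : \sum_(x <- T) psi (a * x) * psi (a * y0) = \sum_(x <- T) psi (a * x).
  apply: (sum_congO_reindex (q := q) (h := +%R^~ y0)) => // [x xT|x y _ _|x y _ _ /congO_sym xy].
  - by apply: coverT; apply: inOD => //; exact: iT.
  - by rewrite /congO (_ : x + y0 - (y + y0) = x - y) //; ring.
  - by rewrite -add_charD -mulrDr; apply: add_char_congr => //; exact: congOMl.
move/eqP: shift; rewrite -big_distrl -subr_eq0 -{2}[\sum_(x <- T) _]mulr1 -mulrBr mulf_eq0.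
by rewrite subr_eq0 (negbTE psi_y0) orbF => /eqP.
Qed.

Section KloostermanPrimePower.
Variables (R : realType) (L : fieldExtType rat) (delta p eps1 eps2 r : L) (e : nat).
Variables (s : seq L) (inv : L -> L).
Hypotheses (Hdelta : different_gen delta) (Hp : prime_elt p).
Hypotheses (He1 : unitO eps1) (He2 : unitO eps2) (He : (0 < e)%N) (Hpr : dvdO p r).
Local Notation q := (eps2 * p ^+ e).
Hypotheses (Hs : reduced_residue_system q s) (Hinv : inverse_mod_on q s inv).
Local Notation psi := (add_char R delta q).

Lemma rrs_ndvd x : x \in s -> inO x /\ ~ dvdO p x.
Proof.
case: Hs => /(_ x) rrs _ _ /rrs[ix ux].
by split=> //; exact/(unit_modO_prime_powerP Hp He2 He ix).
Qed.

Lemma rrs_cover z : inO z -> ~ dvdO p z -> exists2 y, y \in s & congO q z y.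
Proof. by case: Hs => _ _ cover iz /(unit_modO_prime_powerP Hp He2 He iz); exact: cover. Qed.

Lemma sum_rrs_mulr_reindex (C : nmodType) u (F G : L -> C) : inO u -> ~ dvdO p u ->
  {in s &, forall x y, congO q (u * x) y -> F y = G x} ->
  \sum_(x <- s) G x = \sum_(x <- s) F x.
Proof.
move=> iu npu; apply: sum_congO_reindex (rrs_uniq Hs) (rrs_congO_eq Hs) _ _.
  move=> x /rrs_ndvd[ix npx]; apply: rrs_cover; first exact: inOM.
  exact: prime_elt_ndvdM.
move=> x y /rrs_ndvd[ix _] /rrs_ndvd[iy _]; apply: congO_mulKl => //.
exact/(unit_modO_prime_powerP Hp He2 He iu).
Qed.

Lemma add_char_trivial_units a :
  (forall z, inO z -> ~ dvdO p z -> psi (a * z) = 1) -> forall z, inO z -> psi (a * z) = 1.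
Proof.
move=> triv z iz; have [pz|] := pselect (dvdO p z); last exact: triv.
have np1 := prime_elt_ndvd1 Hp.
have npz1 : ~ dvdO p (z + 1).
  by move=> pz1; apply: np1; have := dvdOB pz1 pz; rewrite addrAC subrr add0r.
have psi_a : psi a = 1 by rewrite -[a]mulr1; exact: triv inO1 np1.
by have := triv (z + 1) (inOD iz inO1) npz1; rewrite mulrDr mulr1 add_charD psi_a mulr1.
Qed.

Lemma ramanujan_sum_prime : e = 1%N -> \sum_(x <- s) psi (eps1 * x) = -1.
Proof.
move=> e1; have q0 := prime_power_neq0 e Hp He2.
have ncong0 y : y \in s -> ~ congO q 0 y.
  move=> /rrs_ndvd[_ npy] /(congO_dvd (dvdO_prime_power Hp He2 He)).
  by rewrite /congO sub0r => /dvdON; rewrite opprK.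
have crs : complete_residue_system q (0 :: s).
  split=> [|x|x y|z iz].
  - by rewrite /= (rrs_uniq Hs) andbT; apply/negP => /ncong0; apply; exact: congO_refl.
  - by rewrite inE => /predU1P[->|/rrs_ndvd[]//]; exact: inO0.
  - rewrite !inE => /predU1P[->|xs] /predU1P[->|ys] //.
    + by move/ncong0.
    + by move/congO_sym/ncong0.
    + exact: (rrs_congO_eq Hs xs ys).
  - have [pz|npz] := pselect (dvdO p z).
      by exists 0; rewrite ?mem_head // /congO subr0 e1 expr1; exact: dvdO_unitl.
    by have [y ys zy] := rrs_cover iz npz; exists y; rewrite ?inE ?ys ?orbT.
have nq_eps1 : ~ dvdO q eps1.
  by move/(dvdO_trans (dvdO_prime_power Hp He2 He)); exact: prime_elt_ndvd_unit.
have := sum_add_char_eq0 R Hdelta q0 crs He1.1 nq_eps1.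
rewrite big_cons mulr0 (add_char_dvd R Hdelta q0 (dvdO0 q)).
by move/eqP; rewrite addrC addr_eq0 => /eqP.
Qed.

Lemma kloosterman_prime : e = 1%N ->
  \sum_(x <- s) psi (eps1 * x) * psi (r * inv x) = -1.
Proof.
move=> e1; rewrite -(ramanujan_sum_prime e1); apply: eq_big_seq => x xs.
rewrite [X in _ * X](add_char_dvd R Hdelta (prime_power_neq0 e Hp He2)) ?mulr1 //.
by rewrite e1 expr1; apply: dvdO_unitl He2 _; exact: dvdOMr (Hinv xs).1 Hpr.
Qed.

Lemma kloosterman_term_shift q' t x y : q = q' * p -> inO q' -> inO t ->
  x \in s -> y \in s -> congO q ((1 + q' * t) * x) y ->
  psi (eps1 * y) * psi (r * inv y) =
  psi (eps1 * x) * psi (r * inv x) * psi (q' * (eps1 * x * t)).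
Proof.
(* [y = x] modulo [q'], so [inv y = inv x] modulo [q'], and [p | r] lifts this
   to [r * inv y = r * inv x] modulo [q' * p = q]. *)
move=> Dq iq' it xs ys uxy; have q0 := prime_power_neq0 e Hp He2.
have [[ix _] [iy _]] := (rrs_ndvd xs, rrs_ndvd ys).
have q'_q : dvdO q' q by rewrite Dq; apply: dvdO_mulr; case: Hp.
have shift_eps1 : psi (eps1 * y) = psi (eps1 * x) * psi (q' * (eps1 * x * t)).
  rewrite -add_charD; apply: (add_char_congr R Hdelta q0).
  rewrite (_ : _ + _ = eps1 * ((1 + q' * t) * x)); last by ring.
  by apply: congOMl He1.1 _; exact: congO_sym.
have yx : congO q' y x.
  apply: congO_trans (congO_sym (congO_dvd q'_q uxy)) _.
  rewrite /congO (_ : _ - x = q' * (t * x)); last by ring.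
  by apply: dvdO_mulr; exact: inOM.
have inv_yx : congO q' (inv y) (inv x).
  apply: congO_inv yx (congO_dvd q'_q (Hinv ys).2) (congO_dvd q'_q (Hinv xs).2).
    exact: (Hinv ys).1.
  exact: (Hinv xs).1.
rewrite shift_eps1 (add_char_congr R Hdelta q0 (_ : congO q (r * inv y) (r * inv x))).
  by rewrite mulrAC.
by rewrite Dq; exact: congOM_dvd.
Qed.

Lemma sum_rrs_add_char_neq_size q' : q = q' * p -> inO q' ->
  \sum_(t <- s) psi (q' * t) != (size s)%:R.
Proof.
move=> Dq iq'; have q0 := prime_power_neq0 e Hp He2.
apply/eqP => /sum_expi2pi_eq_size triv_s.
have triv z : inO z -> psi (q' * z) = 1.
  apply: add_char_trivial_units => {}z iz /(rrs_cover iz)[y ys zy].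
  by rewrite (add_char_congr R Hdelta q0 (congOMl iq' zy)); exact: triv_s.
have [w [iw Dq']] := add_char_trivial R Hdelta q0 triv.
apply: (prime_elt_ndvd1 Hp); exists w; split=> //.
apply: (mulfI (_ : q' != 0)); first by apply: contra_neq q0; rewrite Dq => ->; rewrite mul0r.
by rewrite mulr1 {1}Dq' Dq mulrA.
Qed.

Lemma kloosterman_prime_power_eq0 : (1 < e)%N ->
  \sum_(x <- s) psi (eps1 * x) * psi (r * inv x) = 0.
Proof.
move=> e_gt1; have q0 := prime_power_neq0 e Hp He2.
set q' := eps2 * p ^+ e.-1.
have Dq : q = q' * p by rewrite /q' -mulrA -exprSr prednK.
have iq' : inO q' by apply: inOM; [case: He2|apply: inOX; case: Hp].
have p_q' : dvdO p q' by apply: dvdO_prime_power; rewrite // -ltnS prednK.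
apply: (sum_twisted_average_eq0 (ts := s) (phi := fun x t => psi (q' * (eps1 * x * t)))
  (c := \sum_(t <- s) psi (q' * t))); last exact: sum_rrs_add_char_neq_size.
- move=> t /rrs_ndvd[it _]; apply: (sum_rrs_mulr_reindex (u := 1 + q' * t)).
  + by apply: inOD; [exact: inO1|exact: inOM].
  + move=> pu; apply: (prime_elt_ndvd1 Hp); have := dvdOB pu (dvdOMr it p_q').
    by rewrite addrK.
  + by move=> x y xs ys; exact: kloosterman_term_shift.
- move=> x /rrs_ndvd[ix npx]; apply: (sum_rrs_mulr_reindex (u := eps1 * x)).
  + by apply: inOM => //; case: He1.
  + by apply: prime_elt_ndvdM => //; [case: He1|exact: prime_elt_ndvd_unit].
  + move=> t y _ _ /congO_sym ty; apply: (add_char_congr R Hdelta q0).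
    exact: congOMl iq' ty.
Qed.

End KloostermanPrimePower.

Theorem lemma4p1 (L : fieldExtType rat) (delta : L)
  (HF : totally_real L) (Hdelta : different_gen delta)
  (p eps1 eps2 : L) (e : nat)
  (Hp : prime_elt p) (He1 : unitO eps1) (He2 : unitO eps2) (He : (1 <= e)%N)
  (r : L) (Hr : inO r) (Hpr : dvdO p r)
  (R : realType) (s : seq L) (inv : L -> L)
  (Hs : reduced_residue_system (eps2 * p ^+ e) s)
  (Hinv : inverse_mod_on (eps2 * p ^+ e) s inv) :
  kloosterman R s inv (eps1 / delta) (r / delta) (eps2 * p ^+ e)
  = (if e == 1%N then -1 else 0).
Proof.
rewrite kloostermanE; have [e1|e_ne1] := eqVneq e 1%N.
  by rewrite (kloosterman_prime R Hdelta Hp He1 He2 He Hpr Hs Hinv e1).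
apply: (kloosterman_prime_power_eq0 R Hdelta Hp He1 He2 He Hpr Hs Hinv).
by rewrite ltn_neqAle eq_sym e_ne1.
Qed.
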